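(* Let $\mathcal{C}$ be a strict monoidal simplicial category and give $\mathcal{C}^{\mathrm{op}}$ its canonical strict monoidal structure. Then $(\mathcal{C}^\otimes)_{\mathrm{op}}\cong(\mathcal{C}^{\mathrm{op}})^\otimes$.
   Context: A strict monoidal simplicial category is a monoid in $(\mathbf{sCat},\times,* )$; $\mathcal{C}^{\mathrm{op}}(x,y)=\mathcal{C}(y,x)$ with the same tensor on objects. $\mathcal{C}^\otimes$ has objects finite sequences $[x_1,\dots,x_n]$ of objects of $\mathcal{C}$, hom simplicial sets $\coprod_{f\in\Delta([m],[n])}\prod_{i=1}^m\mathcal{C}(x_{f(i-1)+1}\otimes\cdots\otimes x_{f(i)},y_i)$, composition via $\Delta$, $\mathcal{C}$ and $\otimes$, with forgetful simplicial opfibration $\mathcal{C}^\otimes\to\Delta^{\mathrm{op}}$. For $F\colon\mathcal{D}\to\mathbf{sCat}$, $\mathbf{Gr}F$ has objects $(x,c)$, $x\in Fc$, homs $\coprod_{\varphi\colon c\to d}Fd(F\varphi\,x,y)$, composition $(\tau,\psi)\circ(\sigma,\varphi)=(\tau\circ F\psi(\sigma),\psi\varphi)$; by the enriched Grothendieck correspondence, split simplicial opfibrations $P\colon\mathcal{E}\to\mathcal{D}$ (with chosen coCartesian lifts) correspond to functors $\mathcal{D}\to\mathbf{sCat}$ via $\mathbf{Gr}$. The fiberwise opposite of such $P$ is $P_{\mathrm{op}}\colon\mathcal{E}_{\mathrm{op}}\to\mathcal{D}$ given by $\mathbf{Gr}\circ\mathrm{op}_s\circ\mathbf{Gr}^{-1}(P)$,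 where $\mathrm{op}_s$ is the opposite-category functor applied pointwise. Here $\mathcal{C}^\otimes\to\Delta^{\mathrm{op}}$ is split with lifts $[f;1_{y_1},\dots,1_{y_m}]$, $y_i=x_{f(i-1)+1}\otimes\cdots\otimes x_{f(i)}$. *)

From mathcomp Require Import all_boot.
Set Implicit Arguments. Unset Strict Implicit. Unset Printing Implicit Defensive.

(* The simplex category Delta: [m] = {0,..,m} is 'I_m.+1; morphisms    *)
(* are all (weakly) monotone maps.                                     *)
Record Delta (m n : nat) := MkDelta {
  dfun :> 'I_m.+1 -> 'I_n.+1;
  dmono : forall i j : 'I_m.+1, i <= j -> dfun i <= dfun j }.

Definition Delta_id (n : nat) : Delta n n := @MkDelta n n id (fun i j h => h).

Definition Delta_comp (k m n : nat) (f : Delta m n) (g : Delta k m) : Delta k n :=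
  @MkDelta k n (fun i => f (g i)) (fun i j h => dmono f (dmono g h)).

(* Ordinary categories (only the data is needed: used for Delta^op).   *)
Record ordCat := {
  dob : Type;
  dhom : dob -> dob -> Type;
  dcomp : forall a b c, dhom b c -> dhom a b -> dhom a c;
  did : forall a, dhom a a }.
Arguments dcomp {o} {a b c}.
Arguments did {o}.
Arguments dhom : clear implicits.

Definition DeltaOp : ordCat :=
  {| dob := nat;
     dhom a b := Delta b a;
     dcomp a b c psi phi := Delta_comp phi psi;
     did a := Delta_id a |}.

(* A simplicial set is a presheaf on Delta: X n with                   *)
(* act (f : Delta m n) : X n -> X m.  shom x y is the hom simplicial    *)
(* set C(x,y); composition, identities and the tensor are given        *)
(* levelwise, and the laws (simplicial-set laws, naturality, category  *)
(* laws, functoriality of the tensor, strict associativity/unitality)  *)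
(* are collected in [is_strict_monoidal_sCat].                         *)
Record smsCat := {
  sob : Type;
  shom : sob -> sob -> nat -> Type;
  sact : forall x y m n, Delta m n -> shom x y n -> shom x y m;
  scomp : forall x y z n, shom y z n -> shom x y n -> shom x z n;
  sid : forall x n, shom x x n;
  sten : sob -> sob -> sob;
  sunit : sob;
  stenm : forall x x' y y' n,
      shom x x' n -> shom y y' n -> shom (sten x y) (sten x' y') n }.
Arguments sact {s x y m n}.
Arguments scomp {s x y z n}.
Arguments sid {s}.
Arguments sten {s}.
Arguments sunit {s}.
Arguments stenm {s x x' y y' n}.
Arguments shom : clear implicits.
Arguments sob : clear implicits.

Definition TH (C : smsCat) (n : nat) := {p : sob C * sob C & shom C p.1 p.2 n}.
Definition toTH (C : smsCat) (x y : sob C) (n : nat) (h : shom C x y n) : TH C n :=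
  existT (fun p : sob C * sob C => shom C p.1 p.2 n) (x, y) h.

Definition is_strict_monoidal_sCat (C : smsCat) : Prop :=
  (forall x y n (h : shom C x y n), sact (Delta_id n) h = h) /\
  (forall x y k m n (f : Delta m n) (g : Delta k m) (h : shom C x y n),
      sact (Delta_comp f g) h = sact g (sact f h)) /\
  (forall x y z m n (f : Delta m n) (u : shom C y z n) (v : shom C x y n),
      sact f (scomp u v) = scomp (sact f u) (sact f v)) /\
  (forall (x : sob C) m n (f : Delta m n), sact f (sid x n) = sid x m) /\
  (forall w x y z n (u : shom C y z n) (v : shom C x y n) (t : shom C w x n),
      scomp u (scomp v t) = scomp (scomp u v) t) /\
  (forall x y n (u : shom C x y n), scomp (sid y n) u = u) /\
  (forall x y n (u : shom C x y n), scomp u (sid x n) = u) /\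
  (forall x x' y y' m n (f : Delta m n) (u : shom C x x' n) (v : shom C y y' n),
      sact f (stenm u v) = stenm (sact f u) (sact f v)) /\
  (forall x x' x'' y y' y'' n (u' : shom C x' x'' n) (u : shom C x x' n)
          (v' : shom C y' y'' n) (v : shom C y y' n),
      stenm (scomp u' u) (scomp v' v) = scomp (stenm u' v') (stenm u v)) /\
  (forall (x y : sob C) n, stenm (sid x n) (sid y n) = sid (sten x y) n) /\
  (forall x y z : sob C, sten (sten x y) z = sten x (sten y z)) /\
  (forall x : sob C, sten sunit x = x) /\
  (forall x : sob C, sten x sunit = x) /\
  (forall x x' y y' z z' n (u : shom C x x' n) (v : shom C y y' n) (w : shom C z z' n),
      toTH (stenm (stenm u v) w) = toTH (stenm u (stenm v w))) /\
  (forall x x' n (u : shom C x x' n), toTH (stenm (sid sunit n) u) = toTH u) /\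
  (forall x x' n (u : shom C x x' n), toTH (stenm u (sid sunit n)) = toTH u).

Definition opC (C : smsCat) : smsCat :=
  {| sob := sob C;
     shom x y n := shom C y x n;
     sact x y m n f h := @sact C y x m n f h;
     scomp x y z n u v := @scomp C z y x n v u;
     sid x n := sid x n;
     sten := @sten C;
     sunit := @sunit C;
     stenm x x' y y' n u v := @stenm C x' x y' y n u v |}.

Fixpoint tens (C : smsCat) (s : seq (sob C)) : sob C :=
  match s with
  | [::] => sunit
  | x :: s' => match s' with [::] => x | _ => sten x (tens s') end
  end.

Definition tenTH (C : smsCat) (n : nat) (a b : TH C n) : TH C n :=
  match a, b with
  | existT p u, existT q v =>
      existT (fun r : sob C * sob C => shom C r.1 r.2 n)
             (sten p.1 q.1, sten p.2 q.2) (stenm u v)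
  end.

Fixpoint tensL (C : smsCat) (n : nat) (s : seq (TH C n)) : TH C n :=
  match s with
  | [::] => toTH (sid (@sunit C) n)
  | a :: s' => match s' with [::] => a | _ => tenTH a (tensL s') end
  end.

Definition compTH (C : smsCat) (n : nat) (b a c : TH C n) : Prop :=
  exists (x y z : sob C) (v : shom C y z n) (u : shom C x y n),
    b = toTH v /\ a = toTH u /\ c = toTH (scomp v u).

(* For x = (x_1..x_n) and f : [m] -> [n], i : 'I_m (standing for i+1),
   the object x_{f(i)+1} (x) ... (x) x_{f(i+1)}. *)
Definition lo (m : nat) (i : 'I_m) : 'I_m.+1 := widen_ord (leqnSn m) i.
Definition hi (m : nat) (i : 'I_m) : 'I_m.+1 := lift ord0 i.

Definition blockob (C : smsCat) (n m : nat) (x : n.-tuple (sob C)) (f : Delta m n)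
    (i : 'I_m) : sob C :=
  tens (take (f (hi i) - f (lo i)) (drop (f (lo i)) (tval x))).

(* indices j with g(i) < j+1 <= g(i+1), in increasing order *)
Definition blockidx (k m : nat) (g : Delta k m) (i : 'I_k) : seq 'I_m :=
  filter (fun j : 'I_m => (g (lo i) <= j) && (j < g (hi i))) (enum 'I_m).

(* Simplicial categories over an ordinary category D (a simplicial     *)
(* functor P : E -> D, D with discrete homs): objects are fibered over *)
(* D, and the hom simplicial set E(x,y) is the coproduct over          *)
(* phi in D(Px,Py) of the pieces fhom x y phi.  Composition and        *)
(* identities are recorded as relations (graphs); this avoids          *)
(* transports along the propositional strict-monoidal equations.       *)
Record sCatOver (D : ordCat) := {
  fob : dob D -> Type;
  fhom : forall c d, fob c -> fob d -> dhom D c d -> nat -> Type;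
  fact : forall c d (x : fob c) (y : fob d) (phi : dhom D c d) m n,
      Delta m n -> fhom x y phi n -> fhom x y phi m;
  fcomp : forall c d e (x : fob c) (y : fob d) (z : fob e)
      (psi : dhom D d e) (phi : dhom D c d) n,
      fhom y z psi n -> fhom x y phi n -> fhom x z (dcomp psi phi) n -> Prop;
  fid : forall c (x : fob c) n, fhom x x (did c) n -> Prop }.
Arguments fob {D}.
Arguments fhom {D} s {c d}.
Arguments fact {D s c d x y phi m n}.
Arguments fcomp {D s c d e x y z psi phi n}.
Arguments fid {D s c x n}.

(* A cloven (split) simplicial opfibration: chosen lifts phi_! x, and a
   predicate singling out the chosen coCartesian lifts x -> phi_! x. *)
Record cloven (D : ordCat) := {
  ctot : sCatOver D;
  liftob : forall c d, dhom D c d -> fob ctot c -> fob ctot d;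
  islift : forall c d (phi : dhom D c d) (x : fob ctot c) n,
      fhom ctot x (liftob phi x) phi n -> Prop }.
Arguments liftob {D} c0 {c d}.
Arguments islift {D} c0 {c d phi x n}.

Definition eqc (D : ordCat) (E : sCatOver D) c d d' e
    (x : fob E c) (y : fob E d) (y' : fob E d') (z : fob E e)
    (psi1 : dhom D d e) (phi1 : dhom D c d) (psi2 : dhom D d' e) (phi2 : dhom D c d') n
    (u : fhom E y z psi1 n) (a : fhom E x y phi1 n)
    (b : fhom E y' z psi2 n) (a' : fhom E x y' phi2 n) : Prop :=
  exists (w : fhom E x z (dcomp psi1 phi1) n) (w' : fhom E x z (dcomp psi2 phi2) n),
    fcomp u a w /\ fcomp b a' w' /\
    existT (fun phi => fhom E x z phi n) _ w = existT (fun phi => fhom E x z phi n) _ w'.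

(* The fiberwise opposite  Gr o op_s o Gr^{-1}(P), unwound:
   objects are those of E, a morphism x -> y over psi is a fiber morphism
   y -> psi_! x (over the identity), identities are the chosen lifts along
   identities, and (tau,psi') o (sigma,psi) = (k^{-1} o psi'_!(sigma) o tau, psi' psi)
   where psi'_!(sigma) = u is characterised by u o lift = lift o sigma and
   k : (psi' psi)_! x -> psi'_! psi_! x is the comparison (the identity in the
   split case) characterised by k o lift = lift o lift. *)
Definition fibop (D : ordCat) (P : cloven D) : sCatOver D :=
  {| fob := fob (ctot P);
     fhom c d x y psi n := fhom (ctot P) y (liftob P psi x) (did d) n;
     fact c d x y psi m n f h := fact f h;
     fcomp c d e x y z psi' psi n tau sigma rho :=
       exists (l1 : fhom (ctot P) y (liftob P psi' y) psi' n)
              (l2 : fhom (ctot P) (liftob P psi x) (liftob P psi' (liftob P psi x)) psi' n)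
              (l3 : fhom (ctot P) x (liftob P (dcomp psi' psi) x) (dcomp psi' psi) n)
              (l4 : fhom (ctot P) x (liftob P psi x) psi n)
              (u : fhom (ctot P) (liftob P psi' y) (liftob P psi' (liftob P psi x)) (did e) n)
              (k : fhom (ctot P) (liftob P (dcomp psi' psi) x)
                                 (liftob P psi' (liftob P psi x)) (did e) n),
         islift P l1 /\ islift P l2 /\ islift P l3 /\ islift P l4 /\
         eqc u l1 l2 sigma /\ eqc k l3 l2 l4 /\ eqc k rho u tau;
     fid c x n e := islift P e |}.

(* Objects over [n]: sequences [x_1,..,x_n]; morphisms [x] -> [y] over  *)
(* f : [m] -> [n] in Delta: prod_i C(x_{f(i-1)+1} (x)..(x) x_{f(i)}, y_i). *)
Definition Ctens_tot (C : smsCat) : sCatOver DeltaOp :=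
  @Build_sCatOver DeltaOp
    (fun n : nat => n.-tuple (sob C))
    (fun (n m : nat) (x : n.-tuple (sob C)) (y : m.-tuple (sob C)) (f : Delta m n) l =>
       forall i : 'I_m, shom C (blockob x f i) (tnth y i) l)
    (fun n m x y f l l' g h => fun i => sact g (h i))
    (fun (n m k : nat) x y z (g : Delta k m) (f : Delta m n) l tau sigma rho =>
       forall i : 'I_k,
         compTH (toTH (tau i))
                (tensL [seq toTH (sigma j) | j <- blockidx g i])
                (toTH (rho i)))
    (fun (n : nat) (x : n.-tuple (sob C)) l e =>
       forall i : 'I_n, toTH (e i) = toTH (sid (tnth x i) l)).

Definition Ctens (C : smsCat) : cloven DeltaOp :=
  @Build_cloven DeltaOp (Ctens_tot C)
    (fun (n m : nat) (f : Delta m n) (x : n.-tuple (sob C)) =>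
       [tuple blockob x f i | i < m] : m.-tuple (sob C))
    (fun (n m : nat) (f : Delta m n) (x : n.-tuple (sob C)) l e =>
       forall i : 'I_m, toTH (e i) = toTH (sid (blockob x f i) l)).

Definition iso_over (D : ordCat) (E F : sCatOver D) : Prop :=
  exists (Fo : forall c, fob E c -> fob F c)
         (Fh : forall c d (x : fob E c) (y : fob E d) (phi : dhom D c d) n,
             fhom E x y phi n -> fhom F (Fo c x) (Fo d y) phi n),
    (forall c, bijective (Fo c)) /\
    (forall c d x y phi n, bijective (@Fh c d x y phi n)) /\
    (forall c d x y phi m n (f : Delta m n) (h : fhom E x y phi n),
        Fh c d x y phi m (fact f h) = fact f (Fh c d x y phi n h)) /\
    (forall c x n (e : fhom E x x (did c) n), fid e <-> fid (Fh c c x x (did c) n e)) /\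
    (forall c d e x y z psi phi n (t : fhom E y z psi n) (s : fhom E x y phi n)
            (r : fhom E x z (dcomp psi phi) n),
        fcomp t s r <->
        fcomp (Fh d e y z psi n t) (Fh c d x y phi n s) (Fh c e x z (dcomp psi phi) n r)).

Definition well_defined (D : ordCat) (E : sCatOver D) : Prop :=
  (forall c d e (x : fob E c) (y : fob E d) (z : fob E e) psi phi n
          (t : fhom E y z psi n) (s : fhom E x y phi n),
      exists r, fcomp t s r /\ forall r', fcomp t s r' -> r' = r) /\
  (forall c (x : fob E c) n, exists i, fid i /\ forall i', @fid D E c x n i' -> i' = i).

From mathcomp Require Import all_boot zify.
From Stdlib Require Import Eqdep FunctionalExtensionality.
Set Implicit Arguments. Unset Strict Implicit. Unset Printing Implicit Defensive.

(* In C^(x) the chosen lift of [x] along [f] is the family of identities of the blocks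
   x_{f(i-1)+1} (x) ... (x) x_{f(i)}, so pushing a fiber morphism sigma forward along psi'
   tensors the sigma_j over the blocks of psi', and the comparison (psi' psi)_! -> psi'_! psi_!
   is an identity, because the blocks of a composite are concatenations of blocks and the
   tensor is strictly associative and unital.  Hence in the fiberwise opposite a morphism
   [x] -> [y] over psi is a family y_i -> (x-block)_i of C, i.e. a morphism of (C^op)^(x),
   and (tau, psi') o (sigma, psi) is i |-> (tensor of the sigma_j over block i) o tau_i,
   which is composition in (C^op)^(x).  The isomorphism is the identity on objects and a
   reindexing on homs. *)

Lemma filter_iota_range a b m : a <= b <= m ->
  [seq j <- iota 0 m | a <= j < b] = iota a (b - a).
Proof.
move=> /andP[hab hbm]; rewrite -(subnKC (leq_trans hab hbm)) iotaD filter_cat add0n.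
rewrite (@eq_in_filter _ _ pred0) ?filter_pred0; last first.
  by move=> j; rewrite mem_iota => /andP[_ ja]; rewrite leqNgt ja.
rewrite (@eq_in_filter _ _ (fun j => j < a + (b - a))) ?filter_iota_ltn ?(leq_sub2r a hbm) //.
by move=> j; rewrite mem_iota (subnKC hab) => /andP[-> _].
Qed.

Lemma iota_split a b c : a <= b <= c -> iota a (b - a) ++ iota b (c - b) = iota a (c - a).
Proof. by move=> /andP[hab hbc]; rewrite -{2}(subnKC hab) -iotaD; congr iota; lia. Qed.

Lemma flatten_iota_steps (P : nat -> nat) : {homo P : j k / j <= k} -> forall a d,
  flatten [seq iota (P j) (P j.+1 - P j) | j <- iota a d] = iota (P a) (P (a + d) - P a).
Proof.
move=> homP a d; elim: d a => [|d IH] a; first by rewrite addn0 subnn.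
by rewrite /= IH -addSnnS iota_split // !homP ?leq_addr.
Qed.

Lemma toTH_inj (C : smsCat) (a b : sob C) n : injective (@toTH C a b n).
Proof. move=> h h'; exact: inj_pair2. Qed.

Definition ofTH (C : smsCat) n (A : TH C n) (a b : sob C) (E : projT1 A = (a, b)) :
  shom C a b n := eq_rect _ (fun p => shom C p.1 p.2 n) (projT2 A) _ E.

Lemma toTH_ofTH (C : smsCat) n (A : TH C n) (a b : sob C) (E : projT1 A = (a, b)) :
  toTH (ofTH E) = A.
Proof. by case: A E => p h /= E; subst p. Qed.

Lemma exists_homTH (C : smsCat) n (I : Type) (a b : I -> sob C) (A : I -> TH C n)
    (P : (forall i, shom C (a i) (b i) n) -> Prop) :
  (forall i, projT1 (A i) = (a i, b i)) ->
  (forall h, (forall i, toTH (h i) = A i) -> P h) -> exists h, P h.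
Proof. by move=> E PA; exists (fun i => ofTH (E i)); apply: PA => i; exact: toTH_ofTH. Qed.

Definition castH (C : smsCat) n (a a' b b' : sob C) (ea : a = a') (eb : b = b')
    (h : shom C a b n) : shom C a' b' n :=
  match ea in _ = a1 return shom C a1 b' n with
  | erefl => match eb in _ = b1 return shom C a b1 n with erefl => h end
  end.

Lemma toTH_castH (C : smsCat) n (a a' b b' : sob C) (ea : a = a') (eb : b = b')
    (h : shom C a b n) : toTH (castH ea eb h) = toTH h.
Proof. by subst a' b'. Qed.

Lemma castH_sact (C : smsCat) m n (f : Delta m n) (a a' b b' : sob C) (ea : a = a')
    (eb : b = b') (h : shom C a b n) : castH ea eb (sact f h) = sact f (castH ea eb h).
Proof. by subst a' b'. Qed.

Lemma castH_bij (C : smsCat) n I (a a' b b' : I -> sob C) (ea : a =1 a') (eb : b =1 b') :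
  bijective (fun (h : forall i, shom C (a i) (b i) n) i => castH (ea i) (eb i) (h i)).
Proof.
exists (fun h i => castH (esym (ea i)) (esym (eb i)) (h i)) => h;
  by apply: functional_extensionality_dep => i; apply: toTH_inj; rewrite !toTH_castH.
Qed.

Section StrictMonoidal.
Variables (C : smsCat) (HC : is_strict_monoidal_sCat C).

Lemma scomp_sidl x y n (u : shom C x y n) : scomp (sid y n) u = u.
Proof. by have [_ [_ [_ [_ [_ [-> _]]]]]] := HC. Qed.

Lemma scomp_sidr x y n (u : shom C x y n) : scomp u (sid x n) = u.
Proof. by have [_ [_ [_ [_ [_ [_ [-> _]]]]]]] := HC. Qed.

Lemma stenm_sid (x y : sob C) n : stenm (sid x n) (sid y n) = sid (sten x y) n.
Proof. by have [_ [_ [_ [_ [_ [_ [_ [_ [_ [-> _]]]]]]]]]] := HC. Qed.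

Lemma stenA (x y z : sob C) : sten (sten x y) z = sten x (sten y z).
Proof. by have [_ [_ [_ [_ [_ [_ [_ [_ [_ [_ [-> _]]]]]]]]]]] := HC. Qed.

Lemma sten1x (x : sob C) : sten sunit x = x.
Proof. by have [_ [_ [_ [_ [_ [_ [_ [_ [_ [_ [_ [-> _]]]]]]]]]]]] := HC. Qed.

Lemma stenx1 (x : sob C) : sten x sunit = x.
Proof. by have [_ [_ [_ [_ [_ [_ [_ [_ [_ [_ [_ [_ [-> _]]]]]]]]]]]]] := HC. Qed.

Lemma tens_cons (x : sob C) s : tens (x :: s) = sten x (tens s).
Proof. by case: s => [|y s] //=; rewrite stenx1. Qed.

Lemma tens_cat (s1 s2 : seq (sob C)) : tens (s1 ++ s2) = sten (tens s1) (tens s2).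
Proof. by elim: s1 => [|x s1 IH]; rewrite ?sten1x // cat_cons !tens_cons IH stenA. Qed.

Lemma tens_flatten (ss : seq (seq (sob C))) : tens (flatten ss) = tens (map (@tens C) ss).
Proof.
by elim: ss => [|s ss IH] //; rewrite [LHS]/= tens_cat IH tens_cons.
Qed.

End StrictMonoidal.

Lemma hi_val m (i : 'I_m) : hi i = i.+1 :> nat.
Proof. exact: lift0. Qed.

Lemma Delta_lohi k m (g : Delta k m) (i : 'I_k) : g (lo i) <= g (hi i).
Proof. by apply: dmono; rewrite hi_val. Qed.

Lemma blockidx_val k m (g : Delta k m) (i : 'I_k) :
  map val (blockidx g i) = iota (g (lo i)) (g (hi i) - g (lo i)).
Proof.
rewrite -(filter_map val (fun j => g (lo i) <= j < g (hi i))) val_enum_ord.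
by rewrite filter_iota_range // Delta_lohi -ltnS ltn_ord.
Qed.

Lemma blockidx_id m (i : 'I_m) : blockidx (Delta_id m) i = [:: i].
Proof. by apply: (inj_map val_inj); rewrite blockidx_val hi_val /= subSnn. Qed.

Lemma blockidx_comp n m k (f : Delta m n) (g : Delta k m) (i : 'I_k) :
  blockidx (Delta_comp f g) i = flatten [seq blockidx f j | j <- blockidx g i].
Proof.
pose P j := f (inord (minn j m)) : nat.
have homP : {homo P : j1 j2 / j1 <= j2}.
  by move=> j1 j2 le12; apply: dmono; rewrite !inordK ?ltnS ?geq_minr //; lia.
have Pval (j : 'I_m.+1) : P j = f j by rewrite /P (minn_idPl (leq_ord j)) inord_val.
apply: (inj_map val_inj); rewrite map_flatten -map_comp blockidx_val.
rewrite (eq_map (g := fun j : 'I_m => iota (P j) (P j.+1 - P j))); last first.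
  by move=> j /=; rewrite blockidx_val -(Pval (lo j)) -(Pval (hi j)) hi_val.
rewrite (map_comp (fun j => iota (P j) (P j.+1 - P j))) blockidx_val flatten_iota_steps //.
by rewrite subnKC ?Delta_lohi // !Pval.
Qed.

Lemma blockob_map C k m (x : m.-tuple (sob C)) (g : Delta k m) (i : 'I_k) :
  blockob x g i = tens [seq tnth x j | j <- blockidx g i].
Proof.
rewrite /blockob -(map_nth_iota sunit) -?blockidx_val -?map_comp; last first.
  by rewrite size_tuple leq_sub2r // -ltnS ltn_ord.
by congr tens; apply: eq_map => j /=; rewrite (tnth_nth sunit).
Qed.

Lemma blockob_id C m (x : m.-tuple (sob C)) (i : 'I_m) : blockob x (Delta_id m) i = tnth x i.
Proof. by rewrite blockob_map blockidx_id. Qed.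

Lemma blockob_comp C (HC : is_strict_monoidal_sCat C) n m k (x : n.-tuple (sob C))
    (f : Delta m n) (g : Delta k m) (i : 'I_k) :
  blockob x (Delta_comp f g) i = tens [seq blockob x f j | j <- blockidx g i].
Proof.
rewrite blockob_map blockidx_comp map_flatten tens_flatten // -!map_comp.
by congr tens; apply: eq_map => j /=; rewrite blockob_map.
Qed.

Lemma blockob_liftob C (HC : is_strict_monoidal_sCat C) n m k (x : n.-tuple (sob C))
    (f : Delta m n) (g : Delta k m) (i : 'I_k) :
  blockob (liftob (Ctens C) f x) g i = blockob x (Delta_comp f g) i.
Proof.
by rewrite blockob_map blockob_comp //; congr tens; apply: eq_map => j; rewrite tnth_mktuple.
Qed.

Section TotalHoms.
Variables (C : smsCat) (n : nat).

Lemma tensL_cons2 (A B : TH C n) L : tensL [:: A, B & L] = tenTH A (tensL (B :: L)).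
Proof. by []. Qed.

Lemma tenTH_ends (A B : TH C n) :
  projT1 (tenTH A B) = (sten (projT1 A).1 (projT1 B).1, sten (projT1 A).2 (projT1 B).2).
Proof. by case: A B => [[? ?] ?] [[? ?] ?]. Qed.

Lemma tensL_ends (L : seq (TH C n)) :
  projT1 (tensL L) = (tens [seq (projT1 A).1 | A <- L], tens [seq (projT1 A).2 | A <- L]).
Proof.
elim: L => [|A [|B L] IH] //; first by case: A => [[]].
by rewrite tensL_cons2 tenTH_ends IH.
Qed.

Lemma tensL_sid (HC : is_strict_monoidal_sCat C) (bs : seq (sob C)) :
  tensL [seq toTH (sid b n) | b <- bs] = toTH (sid (tens bs) n).
Proof.
elim: bs => [|a [|b bs] IH] //.
by rewrite [map _ _]/= tensL_cons2 IH /= stenm_sid.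
Qed.

Lemma compTH_sidl (HC : is_strict_monoidal_sCat C) b (A : TH C n) :
  (projT1 A).2 = b -> compTH (toTH (sid b n)) A A.
Proof. by case: A => [[x y] u] /= <-; exists x, y, y, (sid y n), u; rewrite scomp_sidl. Qed.

Lemma compTH_sidr (HC : is_strict_monoidal_sCat C) b (A : TH C n) :
  (projT1 A).1 = b -> compTH A (toTH (sid b n)) A.
Proof. by case: A => [[x y] u] /= <-; exists x, x, y, u, (sid x n); rewrite scomp_sidr. Qed.

Lemma compTH_sidlE (HC : is_strict_monoidal_sCat C) b (A R : TH C n) :
  compTH (toTH (sid b n)) A R -> R = A.
Proof.
case=> x [y [z [v [u [E [-> ->]]]]]]; case: (congr1 (@projT1 _ _) E) => ey ez; subst y z.
by rewrite -(toTH_inj E) scomp_sidl.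
Qed.

Lemma compTH_sidrE (HC : is_strict_monoidal_sCat C) b (B R : TH C n) :
  compTH B (toTH (sid b n)) R -> R = B.
Proof.
case=> x [y [z [v [u [-> [E ->]]]]]]; case: (congr1 (@projT1 _ _) E) => ex ey; subst x y.
by rewrite -(toTH_inj E) scomp_sidr.
Qed.

Lemma compTH_fun (B A R R' : TH C n) : compTH B A R -> compTH B A R' -> R = R'.
Proof.
case=> x [y [z [v [u [-> [-> ->]]]]]] [x' [y' [z' [v' [u' [Ev [Eu ->]]]]]]].
case: (congr1 (@projT1 _ _) Ev) => ey ez; subst y' z'.
case: (congr1 (@projT1 _ _) Eu) => ex; subst x'.
by rewrite (toTH_inj Ev) (toTH_inj Eu).
Qed.

Lemma compTH_sig (B A : TH C n) : (projT1 B).1 = (projT1 A).2 ->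
  {R | compTH B A R & projT1 R = ((projT1 A).1, (projT1 B).2)}.
Proof.
case: B A => [[y z] v] [[x y'] u] /= E; subst y'.
by exists (toTH (scomp v u)) => //; exists x, y, z, v, u.
Qed.

End TotalHoms.

Section TensorSequences.
Variables (C : smsCat) (HC : is_strict_monoidal_sCat C).

Definition Ctens_lift c d (phi : Delta d c) (x : c.-tuple (sob C)) n :
    fhom (ctot (Ctens C)) x (liftob (Ctens C) phi x) phi n :=
  fun i => castH erefl (esym (tnth_mktuple _ i)) (sid (blockob x phi i) n).

Lemma Ctens_liftE c d (phi : Delta d c) (x : c.-tuple (sob C)) n i :
  toTH (Ctens_lift phi x n i) = toTH (sid (blockob x phi i) n).
Proof. exact: toTH_castH. Qed.

Lemma tensL_blockidx_id n m (F : 'I_m -> TH C n) (i : 'I_m) :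
  tensL [seq F j | j <- blockidx (Delta_id m) i] = F i.
Proof. by rewrite blockidx_id. Qed.

Lemma tensL_islift c d (phi : Delta d c) (x : c.-tuple (sob C)) n
    (l : fhom (ctot (Ctens C)) x (liftob (Ctens C) phi x) phi n) (js : seq 'I_d) :
  islift (Ctens C) l ->
  tensL [seq toTH (l j) | j <- js] = toTH (sid (tens [seq blockob x phi j | j <- js]) n).
Proof. by move=> liftl; rewrite (eq_map liftl) (map_comp (fun b => toTH (sid b n))) tensL_sid. Qed.

Lemma Ctens_fcomp_idE c d (x : c.-tuple (sob C)) (y z : d.-tuple (sob C)) (phi : Delta d c)
    n    (t : fhom (ctot (Ctens C)) y z (Delta_id d) n) (s : fhom (ctot (Ctens C)) x y phi n)
    (r : fhom (ctot (Ctens C)) x z (Delta_comp phi (Delta_id d)) n) :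
  fcomp t s r <-> forall i, compTH (toTH (t i)) (toTH (s i)) (toTH (r i)).
Proof. by split=> tsr i; move: (tsr i); rewrite /= tensL_blockidx_id. Qed.

Lemma Ctens_fcomp_liftr c d (x : c.-tuple (sob C)) (z : d.-tuple (sob C)) (phi : Delta d c)
    n    (t : fhom (ctot (Ctens C)) (liftob (Ctens C) phi x) z (Delta_id d) n)
    (l : fhom (ctot (Ctens C)) x (liftob (Ctens C) phi x) phi n)
    (r : fhom (ctot (Ctens C)) x z (Delta_comp phi (Delta_id d)) n) :
  islift (Ctens C) l -> fcomp t l r -> forall i, toTH (r i) = toTH (t i).
Proof.
by move=> liftl /Ctens_fcomp_idE tlr i; move: (tlr i); rewrite liftl; apply: compTH_sidrE.
Qed.

Lemma Ctens_fcomp_liftl b c d (x : b.-tuple (sob C)) (y : c.-tuple (sob C))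
    (psi : Delta c b) (phi : Delta d c) n
    (l : fhom (ctot (Ctens C)) y (liftob (Ctens C) phi y) phi n)
    (s : fhom (ctot (Ctens C)) x y psi n)
    (r : fhom (ctot (Ctens C)) x (liftob (Ctens C) phi y) (Delta_comp psi phi) n) :
  islift (Ctens C) l -> fcomp l s r ->
  forall i, toTH (r i) = tensL [seq toTH (s j) | j <- blockidx phi i].
Proof. by move=> liftl lsr i; move: (lsr i); rewrite liftl; apply: compTH_sidlE. Qed.

Lemma Ctens_eqc_toTH c d d' e (x : c.-tuple (sob C)) (y : d.-tuple (sob C))
    (y' : d'.-tuple (sob C)) (z : e.-tuple (sob C)) psi1 phi1 psi2 phi2 n
    (u : fhom (ctot (Ctens C)) y z psi1 n) (a : fhom (ctot (Ctens C)) x y phi1 n)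
    (b : fhom (ctot (Ctens C)) y' z psi2 n) (a' : fhom (ctot (Ctens C)) x y' phi2 n) :
  eqc u a b a' ->
  exists w w', fcomp u a w /\ fcomp b a' w' /\ forall i, toTH (w i) = toTH (w' i).
Proof.
case=> w [w' [uaw [baw' ww']]]; exists w, w'; do 2!split=> //.
(* comparing pointwise in TH needs no identification of the indices of [w] and [w'] *)
by move=> i; exact: (congr1 (fun p : {phi : dhom DeltaOp c e & _} => toTH (projT2 p i)) ww').
Qed.

End TensorSequences.

Section FiberwiseOppositeComposition.
Variables (C : smsCat) (HC : is_strict_monoidal_sCat C).
Variables (c d e : nat) (x : c.-tuple (sob C)) (y : d.-tuple (sob C)) (z : e.-tuple (sob C)).
Variables (psi : Delta d c) (psi' : Delta e d) (n : nat).
Variables (tau : fhom (fibop (Ctens C)) y z psi' n) (sigma : fhom (fibop (Ctens C)) x y psi n).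

Let S i := tensL [seq toTH (sigma j) | j <- blockidx psi' i].

Lemma fibop_fcomp_tensL (rho : fhom (fibop (Ctens C)) x z (Delta_comp psi psi') n) :
  fcomp tau sigma rho -> forall i, compTH (S i) (toTH (tau i)) (toTH (rho i)).
Proof.
case=> l1 [l2 [l3 [l4 [u [k [lift1 [lift2 [lift3 [lift4 [ul1_l2s [kl3_l2l4 krho_utau]]]]]]]]]]] i.
have [w [w' [ul1w [l2sw' ww']]]] := Ctens_eqc_toTH ul1_l2s.
have u_tensL : toTH (u i) = S i.
  by rewrite -(Ctens_fcomp_liftr HC lift1 ul1w) ww' (Ctens_fcomp_liftl HC lift2 l2sw').
have [W [W' [kl3W [l2l4W' WW']]]] := Ctens_eqc_toTH kl3_l2l4.
have k_sid : toTH (k i) = toTH (sid (tens [seq blockob x psi j | j <- blockidx psi' i]) n).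
  rewrite -(Ctens_fcomp_liftr HC lift3 kl3W) WW' (Ctens_fcomp_liftl HC lift2 l2l4W').
  exact: tensL_islift.
have [V [V' [/Ctens_fcomp_idE krhoV [/Ctens_fcomp_idE utauV' VV']]]] :=
  Ctens_eqc_toTH krho_utau.
have V_rho : toTH (V i) = toTH (rho i) by move: (krhoV i); rewrite k_sid; apply: compTH_sidlE.
by rewrite -u_tensL -V_rho VV'; exact: utauV'.
Qed.

Lemma tensL_fibop_ends i : projT1 (S i) = (blockob y psi' i, blockob x (Delta_comp psi psi') i).
Proof.
rewrite tensL_ends -!map_comp blockob_comp // blockob_map.
by congr (tens _, tens _); apply: eq_map => j /=; rewrite ?blockob_id ?tnth_mktuple.
Qed.

Lemma fibop_fcomp_of_tensL (rho : fhom (fibop (Ctens C)) x z (Delta_comp psi psi') n) :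
  (forall i, compTH (S i) (toTH (tau i)) (toTH (rho i))) -> fcomp tau sigma rho.
Proof.
move=> Stau_rho.
exists (Ctens_lift psi' y n), (Ctens_lift psi' (liftob (Ctens C) psi x) n).
exists (Ctens_lift (Delta_comp psi psi') x n), (Ctens_lift psi x n).
apply: (exists_homTH (A := S)) => [i | u uS].
  by rewrite tensL_fibop_ends blockob_id !tnth_mktuple blockob_liftob.
pose id_comp i := toTH (sid (blockob x (Delta_comp psi psi') i) n).
apply: (exists_homTH (A := id_comp)) => [i | k k_sid].
  by rewrite /= blockob_id !tnth_mktuple blockob_liftob.
do 4!(split; first exact: Ctens_liftE).
split; [|split].
- apply: (exists_homTH (A := S)) => [i | w wS].
    by rewrite tensL_fibop_ends tnth_mktuple blockob_liftob.
  exists w; split; [|split=> //].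
    apply/Ctens_fcomp_idE => i; rewrite uS wS Ctens_liftE.
    by apply: (compTH_sidr HC); rewrite tensL_fibop_ends.
  move=> i; rewrite wS Ctens_liftE; apply: (compTH_sidl HC) => //.
  by rewrite tensL_fibop_ends blockob_liftob.
- apply: (exists_homTH (A := id_comp)) => [i | W W_sid].
    by rewrite /= tnth_mktuple blockob_liftob.
  exists W; split; [|split=> //].
    by apply/Ctens_fcomp_idE => i; rewrite k_sid W_sid Ctens_liftE; apply: (compTH_sidl HC).
  move=> i; rewrite W_sid Ctens_liftE (tensL_islift HC _ (Ctens_liftE psi x n)) -blockob_comp //.
  by apply: (compTH_sidl HC); rewrite /= blockob_liftob.
- apply: (exists_homTH (A := fun i => toTH (rho i))) => [i | V V_rho].
    by rewrite /= !tnth_mktuple blockob_liftob.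
  exists V; split; [|split=> //]; apply/Ctens_fcomp_idE => i; rewrite V_rho.
    by rewrite k_sid; apply: (compTH_sidl HC); rewrite /= tnth_mktuple.
  by rewrite uS; exact: Stau_rho.
Qed.

Lemma fibop_fcompP (rho : fhom (fibop (Ctens C)) x z (Delta_comp psi psi') n) :
  fcomp tau sigma rho <-> forall i, compTH (S i) (toTH (tau i)) (toTH (rho i)).
Proof. by split; [exact: fibop_fcomp_tensL | exact: fibop_fcomp_of_tensL]. Qed.

Lemma fibop_fcomp_exists_unique :
  exists rho, fcomp tau sigma rho /\ forall rho', fcomp tau sigma rho' -> rho' = rho.
Proof.
have S_tau i : (projT1 (S i)).1 = (projT1 (toTH (tau i))).2.
  by rewrite tensL_fibop_ends /= tnth_mktuple.
pose R i := compTH_sig (S_tau i).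
apply: (exists_homTH (A := fun i => s2val (R i))) => [i | rho rhoR].
  by rewrite (s2valP' (R i)) tensL_fibop_ends /= tnth_mktuple.
have comp_rho i : compTH (S i) (toTH (tau i)) (toTH (rho i)) by rewrite rhoR; exact: s2valP.
split=> [|rho' /fibop_fcompP comp_rho']; first by apply/fibop_fcompP.
apply: functional_extensionality_dep => i; apply: toTH_inj.
exact: compTH_fun (comp_rho' i) (comp_rho i).
Qed.

End FiberwiseOppositeComposition.

Lemma fibop_Ctens_well_defined C (HC : is_strict_monoidal_sCat C) :
  well_defined (fibop (Ctens C)).
Proof.
split=> [c d e x y z psi phi n t s | c x n]; first exact: fibop_fcomp_exists_unique.
exists (Ctens_lift (Delta_id c) x n); split=> [|e' e'_lift]; first exact: Ctens_liftE.
by apply: functional_extensionality_dep => i; apply: toTH_inj; rewrite e'_lift Ctens_liftE.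
Qed.

Section Opposite.
Variable C : smsCat.

Lemma tens_op (s : seq (sob C)) : @tens (opC C) s = tens s.
Proof. by elim: s => [|a [|b s] IH] //; exact: (congr1 (@sten C a) IH). Qed.

Lemma blockob_op c d (x : c.-tuple (sob C)) (phi : Delta d c) i :
  @blockob (opC C) c d x phi i = blockob x phi i.
Proof. exact: tens_op. Qed.

Definition swapTH n (A : TH C n) : TH (opC C) n :=
  let: existT p h := A in existT (fun q : sob C * sob C => shom C q.2 q.1 n) (p.2, p.1) h.

Definition unswapTH n (A : TH (opC C) n) : TH C n :=
  let: existT p h := A in existT (fun q : sob C * sob C => shom C q.1 q.2 n) (p.2, p.1) h.

Lemma swapTHK n : cancel (@swapTH n) (@unswapTH n).
Proof. by case=> [[? ?] ?]. Qed.

Lemma toTH_opC n (a b : sob C) (h : shom C b a n) : @toTH (opC C) a b n h = swapTH (toTH h).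
Proof. by []. Qed.

Lemma swapTH_tenTH n (A B : TH C n) :
  swapTH (tenTH A B) = @tenTH (opC C) n (swapTH A) (swapTH B).
Proof. by case: A B => [[? ?] ?] [[? ?] ?]. Qed.

Lemma tensL_swapTH n (L : seq (TH C n)) :
  @tensL (opC C) n (map (@swapTH n) L) = swapTH (tensL L).
Proof.
by elim: L => [|A [|B L] IH] //; rewrite tensL_cons2 swapTH_tenTH -IH.
Qed.

Lemma compTH_swapTH n (T S R : TH C n) :
  @compTH (opC C) n (swapTH T) (swapTH S) (swapTH R) <-> compTH S T R.
Proof.
split=> [[x [y [z [v [u [ET [ES ER]]]]]]] | [x [y [z [v [u [-> [-> ->]]]]]]]].
  rewrite !toTH_opC in ET ES ER.
  have swap_inj := can_inj (@swapTHK n).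
  by move: ET ES ER => /swap_inj -> /swap_inj -> /swap_inj ->; exists z, y, x, u, v.
by exists z, y, x, u, v.
Qed.

End Opposite.

Section IsoToOpposite.
Variable C : smsCat.

Definition to_op_hom c d (x : c.-tuple (sob C)) (y : d.-tuple (sob C)) (phi : Delta d c) n
    (h : fhom (fibop (Ctens C)) x y phi n) : fhom (ctot (Ctens (opC C))) x y phi n :=
  fun i => castH (blockob_id y i) (etrans (tnth_mktuple _ i) (esym (blockob_op x phi i))) (h i).

Lemma toTH_to_op_hom c d (x : c.-tuple (sob C)) (y : d.-tuple (sob C)) (phi : Delta d c) n
    (h : fhom (fibop (Ctens C)) x y phi n) i :
  toTH (to_op_hom h i) = swapTH (toTH (h i)).
Proof. by rewrite toTH_opC toTH_castH. Qed.

Lemma to_op_hom_bij c d (x : c.-tuple (sob C)) (y : d.-tuple (sob C)) (phi : Delta d c) n :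
  bijective (@to_op_hom c d x y phi n).
Proof.
exact (castH_bij n (blockob_id y)
         (fun i => etrans (tnth_mktuple _ i) (esym (blockob_op x phi i)))).
Qed.

Lemma to_op_hom_fact c d (x : c.-tuple (sob C)) (y : d.-tuple (sob C)) (phi : Delta d c) m n
    (f : Delta m n) (h : fhom (fibop (Ctens C)) x y phi n) :
  to_op_hom (fact f h) = fact f (to_op_hom h).
Proof. by apply: functional_extensionality_dep => i; rewrite /to_op_hom /= castH_sact. Qed.

Lemma to_op_hom_fid c (x : c.-tuple (sob C)) n
    (e : fhom (fibop (Ctens C)) x x (Delta_id c) n) :
  fid e <-> fid (to_op_hom e).
Proof.
have sid_id i : toTH (sid (blockob x (Delta_id c) i) n) = toTH (sid (tnth x i) n).
  by rewrite blockob_id.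
split=> e_sid i; move: (e_sid i); rewrite toTH_to_op_hom toTH_opC sid_id; first by move->.
by move/(can_inj (@swapTHK _ _)).
Qed.

Lemma to_op_hom_fcompP c d e (x : c.-tuple (sob C)) (y : d.-tuple (sob C))
    (z : e.-tuple (sob C)) (psi : Delta d c) (psi' : Delta e d) n
    (tau : fhom (fibop (Ctens C)) y z psi' n) (sigma : fhom (fibop (Ctens C)) x y psi n)
    (rho : fhom (fibop (Ctens C)) x z (Delta_comp psi psi') n) :
  fcomp (to_op_hom tau) (to_op_hom sigma) (to_op_hom rho) <->
  forall i,
    compTH (tensL [seq toTH (sigma j) | j <- blockidx psi' i]) (toTH (tau i)) (toTH (rho i)).
Proof.
have swap_block i : [seq toTH (to_op_hom sigma j) | j <- blockidx psi' i] =
                    map (@swapTH C n) [seq toTH (sigma j) | j <- blockidx psi' i].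
  by rewrite -map_comp; apply: eq_map => j; exact: toTH_to_op_hom.
split=> tsr i; move: (tsr i);
  by rewrite /= swap_block tensL_swapTH !toTH_to_op_hom compTH_swapTH.
Qed.

End IsoToOpposite.

Lemma fibop_Ctens_iso_op C (HC : is_strict_monoidal_sCat C) :
  iso_over (fibop (Ctens C)) (ctot (Ctens (opC C))).
Proof.
exists (fun c x => x), (fun c d x y phi n => @to_op_hom C c d x y phi n).
split; first by move=> c; exists id.
split; first by move=> *; exact: to_op_hom_bij.
split; first by move=> *; exact: to_op_hom_fact.
split; first by move=> *; exact: to_op_hom_fid.
by move=> *; rewrite fibop_fcompP // to_op_hom_fcompP.
Qed.

Theorem corollary5p9 (C : smsCat) (HC : is_strict_monoidal_sCat C) :
  well_defined (fibop (Ctens C)) /\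
  iso_over (fibop (Ctens C)) (ctot (Ctens (opC C))).
Proof. by split; [exact: fibop_Ctens_well_defined | exact: fibop_Ctens_iso_op]. Qed.
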